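(* Let $n\ge2$, let $P$ be a partial $n$-Metric on a set $X$, let $x_o\in X$, and let $f:X\to X$ be non-expansive, i.e. $P(\langle f(x)\rangle^{n-1},f(y))\le P(\langle x\rangle^{n-1},y)$ for all $x,y\in X$. If $a$ is a special limit of the orbit $\{f^i(x_o)\}_{i\in\mathbb{N}}$, then $$P(\langle a\rangle^{n-1},f(a))=P(\langle a\rangle^n)\quad\text{and}\quad P(\langle f(a)\rangle^{n-1},a)\le P(\langle a\rangle^n).$$
   Context: Notation: $\langle a\rangle^k$ denotes the $k$-tuple $(a,\dots,a)$ inserted into an argument list; $f^0(x_o)=x_o$, $f^{i+1}(x_o)=f(f^i(x_o))$. A partial $n$-Metric on $X$ is a function $P:X^n\to\mathbb{R}$ such that for all $x_1,\dots,x_n,a\in X$: (1) $P(\langle x_1\rangle^n)\le P(\langle x_1\rangle^{n-1},x_2)$; (2) $P$ is invariant under permutations of its arguments; (3) $P(\langle x_1\rangle^{n-1},x_2)=P(\langle x_1\rangle^n)$ and $P(\langle x_2\rangle^{n-1},x_1)=P(\langle x_2\rangle^n)$ iff $x_1=x_2$; (4) $P(x_1,\dots,x_n)\le P(x_1,\dots,x_{n-1},a)+P(\langle a\rangle^{n-1},x_n)-P(\langle a\rangle^n)$. A sequence $\{x_i\}$ is Cauchy with central distance $r$ if for every $\epsilon>0$ there is $N$ with $|P(x_{i_1},\dots,x_{i_n})-r|<\epsilon$ for all $i_1,\dots,i_n>N$. A point $a$ is a limit of $\{x_i\}$ iff for every $\epsilon>0$ there is $N$ with $P(\langle a\rangle^{n-1},x_i)-P(\langle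 a\rangle^n)<\epsilon$ for all $i>N$. A special limit of a Cauchy sequence with central distance $r$ is a limit $a$ with $P(\langle a\rangle^n)=r$. *)

From Stdlib Require Import Reals.
From mathcomp Require Import all_boot perm.

Set Implicit Arguments.
Unset Strict Implicit.
Unset Printing Implicit Defensive.

Definition cst {X : Type} (n : nat) (x : X) : 'I_n -> X := fun _ => x.

Definition rep_last {X : Type} (n : nat) (x y : X) : 'I_n -> X :=
  fun i => if (nat_of_ord i == n.-1)%N then y else x.

Definition upd_last {X : Type} (n : nat) (x : 'I_n -> X) (a : X) : 'I_n -> X :=
  fun i => if (nat_of_ord i == n.-1)%N then a else x i.

Arguments cst {X} n x _.
Arguments rep_last {X} n x y _.
Arguments upd_last {X} {n} x a _.

Definition partial_nmetric {X : Type} (n : nat) (P : ('I_n -> X) -> R) : Prop :=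
  (forall x1 x2 : X, Rle (P (cst n x1)) (P (rep_last n x1 x2))) /\
  (forall (x : 'I_n -> X) (s : {perm 'I_n}), P (fun i => x (s i)) = P x) /\
  (forall x1 x2 : X,
      (P (rep_last n x1 x2) = P (cst n x1) /\ P (rep_last n x2 x1) = P (cst n x2))
      <-> x1 = x2) /\
  (forall (x : 'I_n -> X) (a : X) (k : 'I_n), nat_of_ord k = n.-1 ->
      Rle (P x) (Rminus (Rplus (P (upd_last x a)) (P (rep_last n a (x k)))) (P (cst n a)))).

Definition cauchy_central {X : Type} (n : nat) (P : ('I_n -> X) -> R)
  (s : nat -> X) (r : R) : Prop :=
  forall eps : R, Rlt 0 eps -> exists N : nat,
    forall idx : 'I_n -> nat, (forall k, (N < idx k)%N) ->
      Rlt (Rabs (Rminus (P (fun k => s (idx k))) r)) eps.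

Definition is_limit {X : Type} (n : nat) (P : ('I_n -> X) -> R)
  (s : nat -> X) (a : X) : Prop :=
  forall eps : R, Rlt 0 eps -> exists N : nat,
    forall i : nat, (N < i)%N ->
      Rlt (Rminus (P (rep_last n a (s i))) (P (cst n a))) eps.

Definition special_limit {X : Type} (n : nat) (P : ('I_n -> X) -> R)
  (s : nat -> X) (a : X) : Prop :=
  exists r : R, cauchy_central P s r /\ is_limit P s a /\ P (cst n a) = r.

(* Write r = P<a>^n and c = n - 1.  Moving the repeated argument one position
   at a time with the triangle inequality (4) gives the "swap" estimate
   P(<y>^(n-1), a) <= r + c (P(<a>^(n-1), y) - r).  Along the orbit, y = f^i(x_o)
   satisfies P(<a>^(n-1), y) -> r and P(<f y>^n) -> r, so the triangle inequality
   through f y, non-expansiveness and the swap estimate bound both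
   P(<a>^(n-1), f a) and P(<f a>^(n-1), a) by r + (c + 2) eps for every eps > 0. *)

From Stdlib Require Import Reals.
From mathcomp Require Import all_boot perm.
From Stdlib Require Import Lra Lia FunctionalExtensionality.
From mathcomp Require Import zify.

Set Implicit Arguments.
Unset Strict Implicit.

Open Scope R_scope.

Lemma le_of_forall_le_add_mul (x r c : R) :
  0 < c -> (forall eps, 0 < eps -> x <= r + c * eps) -> x <= r.
Proof.
move=> c_gt0 le_x; apply: Rle_plus_epsilon => eps eps_gt0.
have -> : eps = c * (eps / c) by field; lra.
by apply: le_x; apply: Rdiv_lt_0_compat.
Qed.

Lemma special_limit_approx (X : Type) (n : nat) (P : ('I_n -> X) -> R)
  (s : nat -> X) (a : X) : special_limit P s a ->
  forall eps, 0 < eps -> exists N, forall i, (N < i)%N ->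
    P (rep_last n a (s i)) - P (cst n a) < eps /\
    P (cst n a) - P (cst n (s i)) < eps.
Proof.
move=> [r [cauchy_s [lim_a r_def]]] eps eps_gt0; subst r.
have [N1 near_r] := cauchy_s eps eps_gt0.
have [N2 near_a] := lim_a eps eps_gt0.
exists (N1 + N2)%N => i lt_i; split; first by apply: near_a; lia.
have := near_r (fun _ => i) ltac:(move=> k; lia).
by move=> /Rabs_def2 [_]; rewrite /cst; lra.
Qed.

Section PartialNMetric.

Variables (X : Type) (n : nat) (P : ('I_n -> X) -> R).
Hypothesis n_gt0 : (0 < n)%N.
Hypothesis HP : partial_nmetric P.

Definition rep_prefix (m : nat) (y a : X) : 'I_n -> X :=
  fun i => if (i < m)%N then y else a.

Lemma rep_lastE (y a : X) : rep_last n y a = rep_prefix n.-1 y a.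
Proof.
apply: functional_extensionality => i; rewrite /rep_last /rep_prefix.
have := ltn_ord i; case: eqP => [->|ne_last] lt_i_n; first by rewrite ltnn.
by have -> : (i < n.-1)%N by lia.
Qed.

Lemma upd_last_rep_last (x y z : X) :
  upd_last (rep_last n x z) y = rep_last n x y.
Proof.
by apply: functional_extensionality => i; rewrite /upd_last /rep_last; case: eqP.
Qed.

Lemma pnm_le_rep_last (x y : X) : P (cst n x) <= P (rep_last n x y).
Proof. by case: HP. Qed.

Lemma pnm_triangle_rep_last (x y z : X) :
  P (rep_last n x z) <= P (rep_last n x y) + P (rep_last n y z) - P (cst n y).
Proof.
have [_ [_ [_ triangle]]] := HP.
have lt_last : (n.-1 < n)%N by lia.
have := triangle (rep_last n x z) y (Ordinal lt_last) erefl.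
by rewrite upd_last_rep_last /rep_last /= eqxx.
Qed.

Lemma pnm_rep_prefix_le (y a : X) (m : nat) : (m <= n)%N ->
  P (rep_prefix m y a) <= P (cst n a) + INR m * (P (rep_last n a y) - P (cst n a)).
Proof.
have [_ [perm_inv [_ triangle]]] := HP.
elim: m => [|m IHm] le_m_n.
  have -> : rep_prefix 0 y a = cst n a.
    by apply: functional_extensionality => i; rewrite /rep_prefix ltn0.
  rewrite /=; lra.
have lt_m_n : (m < n)%N by [].
have lt_last : (n.-1 < n)%N by lia.
pose k := Ordinal lt_m_n; pose l := Ordinal lt_last.
(* Swap position m with the last position, then use (4) to replace the y there by a. *)
pose t (m' : nat) := fun i => rep_prefix m' y a (tperm k l i).
have perm_t (m' : nat) : P (rep_prefix m' y a) = P (t m') by rewrite /t perm_inv.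
have last_t : t m.+1 l = y by rewrite /t /rep_prefix tpermR /= ltnSn.
have upd_t : upd_last (t m.+1) a = t m.
  apply: functional_extensionality => i; rewrite /upd_last /t /rep_prefix.
  case: tpermP => [->|->|ne_ik ne_il] /=.
  - case: (m =P n.-1) => [->|ne_m_last]; first by rewrite ltnn.
    have -> : (n.-1 < m.+1)%N = false by lia.
    by have -> : (n.-1 < m)%N = false by lia.
  - by rewrite eqxx ltnn.
  - have ne_i_last : nat_of_ord i != n.-1 by apply/eqP => e; apply: ne_il; apply: val_inj.
    have ne_i_m : nat_of_ord i != m by apply/eqP => e; apply: ne_ik; apply: val_inj.
    by rewrite (negbTE ne_i_last) ltnS leq_eqVlt (negbTE ne_i_m).
have := triangle (t m.+1) a l erefl.
rewrite last_t upd_t -!perm_t S_INR.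
have := IHm (ltnW le_m_n); lra.
Qed.

Lemma pnm_rep_last_swap_le (y a : X) :
  P (rep_last n y a) <=
  P (cst n a) + INR n.-1 * (P (rep_last n a y) - P (cst n a)).
Proof. by rewrite rep_lastE; apply: pnm_rep_prefix_le; lia. Qed.

Section NonExpansiveStep.

Variables (f : X -> X) (a y : X) (eps : R).
Hypothesis f_nonexp :
  forall x z : X, P (rep_last n (f x) (f z)) <= P (rep_last n x z).
Hypothesis near_y : P (rep_last n a y) - P (cst n a) < eps.
Hypothesis near_fy : P (rep_last n a (f y)) - P (cst n a) < eps.
Hypothesis cst_fy : P (cst n a) - P (cst n (f y)) < eps.

Let c := INR n.-1.

Let c_ge0 : 0 <= c.
Proof. exact: pos_INR. Qed.

Lemma rep_last_image_le :
  P (rep_last n a (f a)) <= P (cst n a) + (c + 2) * eps.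
Proof.
have := pnm_triangle_rep_last a (f y) (f a).
have := f_nonexp y a.
have := pnm_rep_last_swap_le y a.
have := pnm_le_rep_last a y.
have : c * (P (rep_last n a y) - P (cst n a)) <= c * eps.
  by apply: Rmult_le_compat_l; lra.
rewrite -/c; lra.
Qed.

Lemma rep_last_image_swap_le :
  P (rep_last n (f a) a) <= P (cst n a) + (c + 2) * eps.
Proof.
have := pnm_triangle_rep_last (f a) (f y) a.
have := f_nonexp a y.
have := pnm_rep_last_swap_le (f y) a.
have := pnm_le_rep_last a (f y).
have : c * (P (rep_last n a (f y)) - P (cst n a)) <= c * eps.
  by apply: Rmult_le_compat_l; lra.
rewrite -/c; lra.
Qed.

End NonExpansiveStep.

End PartialNMetric.

Theorem lemma6p7 (X : Type) (n : nat) (P : ('I_n -> X) -> R)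
  (x0 : X) (f : X -> X) (a : X) :
  (2 <= n)%N ->
  partial_nmetric P ->
  (forall x y : X, Rle (P (rep_last n (f x) (f y))) (P (rep_last n x y))) ->
  special_limit P (fun i => iter i f x0) a ->
  P (rep_last n a (f a)) = P (cst n a) /\
  Rle (P (rep_last n (f a) a)) (P (cst n a)).
Proof.
move=> n_ge2 HP f_nonexp lim_a.
have n_gt0 : (0 < n)%N by lia.
have c2_gt0 : 0 < INR n.-1 + 2.
  by apply: Rplus_le_lt_0_compat; [exact: pos_INR | lra].
have orbit_approx eps : 0 < eps -> exists y,
    [/\ P (rep_last n a y) - P (cst n a) < eps,
        P (rep_last n a (f y)) - P (cst n a) < eps &
        P (cst n a) - P (cst n (f y)) < eps].
  move=> eps_gt0; have [N near] := special_limit_approx lim_a eps_gt0.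
  exists (iter N.+1 f x0).
  have [near1 _] := near N.+1 (ltnSn N).
  by have [near2 cst2] := near N.+2 (ltnW (ltnSn N.+1)).
split.
- apply: Rle_antisym; last exact: (pnm_le_rep_last HP).
  apply: le_of_forall_le_add_mul c2_gt0 _ => eps /orbit_approx [y [near_y near_fy cst_fy]].
  exact: (rep_last_image_le n_gt0 HP f_nonexp near_y near_fy cst_fy).
- apply: le_of_forall_le_add_mul c2_gt0 _ => eps /orbit_approx [y [near_y near_fy cst_fy]].
  exact: (rep_last_image_swap_le n_gt0 HP f_nonexp near_y near_fy cst_fy).
Qed.
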